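(* Let $A>0$, $C>0$, $m>0$, $g>0$, $z>0$ and $\mathfrak{M}_3\in\mathbb{R}$. Consider the differential system on $\mathbb{R}^6$ (heavy symmetric top) $$\dot{\vec M}=\vec M\times \mathbb{I}^{-1}\vec M+mg\,\vec\gamma\times\vec r_G,\qquad \dot{\vec\gamma}=\vec\gamma\times\mathbb{I}^{-1}\vec M,$$ where $\vec M=(M_1,M_2,M_3)$, $\vec\gamma=(\gamma_1,\gamma_2,\gamma_3)$, $\mathbb{I}=\mathrm{diag}(A,A,C)$, $\vec r_G=(0,0,z)$ and $\times$ is the cross product in $\mathbb{R}^3$. The point $x_e=(0,0,\mathfrak{M}_3,0,0,1)$ is an equilibrium of this system, and the functions $$H=\tfrac12\Big(\tfrac{M_1^2}{A}+\tfrac{M_2^2}{A}+\tfrac{M_3^2}{C}\Big)+mgz\gamma_3,\quad C_1=\gamma_1^2+\gamma_2^2+\gamma_3^2,\quad C_2=M_1\gamma_1+M_2\gamma_2+M_3\gamma_3,\quad F=M_3$$ are conserved quantities. Then $x_e$ is stable with respect to the set of conserved quantities $\{H,C_1,C_2,F\}$ if and only if $\mathfrak{M}_3^2\geq 4Amgz$.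
   Context: Definition: an equilibrium point $x_e$ of a differential equation $\dot x=f(x)$ on an open set $D\subset\mathbb{R}^n$ is called stable with respect to a set of conserved quantities $\{F_1,\dots,F_k\}$ if there exists a continuous function $\Phi:\mathbb{R}^k\to\mathbb{R}$ such that the function $x\mapsto \Phi(F_1(x),\dots,F_k(x))-\Phi(F_1(x_e),\dots,F_k(x_e))$ is positive definite at $x_e$, i.e. it vanishes at $x_e$ and is strictly positive at every $x\neq x_e$ in some neighborhood of $x_e$. *)

From Stdlib Require Import Reals.
Open Scope R_scope.

Record vec6 : Type := mk6 { M1 : R; M2 : R; M3 : R; g1 : R; g2 : R; g3 : R }.

Definition dist6sq (x y : vec6) : R :=
  (M1 x - M1 y)^2 + (M2 x - M2 y)^2 + (M3 x - M3 y)^2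
  + (g1 x - g1 y)^2 + (g2 x - g2 y)^2 + (g3 x - g3 y)^2.

Definition continuous4 (Phi : R -> R -> R -> R -> R) : Prop :=
  forall a b c d eps, 0 < eps -> exists delta, 0 < delta /\
    forall a' b' c' d', Rabs (a' - a) < delta -> Rabs (b' - b) < delta ->
      Rabs (c' - c) < delta -> Rabs (d' - d) < delta ->
      Rabs (Phi a' b' c' d' - Phi a b c d) < eps.

Definition pos_def_at (V : vec6 -> R) (xe : vec6) : Prop :=
  V xe = 0 /\ exists r, 0 < r /\
    forall x, x <> xe -> dist6sq x xe < r^2 -> 0 < V x.

Definition stable_wrt4 (F1 F2 F3 F4 : vec6 -> R) (xe : vec6) : Prop :=
  exists Phi : R -> R -> R -> R -> R, continuous4 Phi /\
    pos_def_at (fun x => Phi (F1 x) (F2 x) (F3 x) (F4 x)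
                         - Phi (F1 xe) (F2 xe) (F3 xe) (F4 xe)) xe.

Definition cross (a1 a2 a3 b1 b2 b3 : R) : R * R * R :=
  (a2*b3 - a3*b2, a3*b1 - a1*b3, a1*b2 - a2*b1).

(* The vector field (for documentation; the stability notion does not use it). *)
Definition top_field (A C m g z : R) (x : vec6) : vec6 :=
  let '(w1, w2, w3) := (M1 x / A, M2 x / A, M3 x / C) in
  let '(p1, p2, p3) := cross (M1 x) (M2 x) (M3 x) w1 w2 w3 in
  let '(q1, q2, q3) := cross (g1 x) (g2 x) (g3 x) 0 0 z in
  let '(s1, s2, s3) := cross (g1 x) (g2 x) (g3 x) w1 w2 w3 in
  mk6 (p1 + m*g*q1) (p2 + m*g*q2) (p3 + m*g*q3) s1 s2 s3.

Definition Ham (A C m g z : R) (x : vec6) : R :=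
  / 2 * (M1 x ^ 2 / A + M2 x ^ 2 / A + M3 x ^ 2 / C) + m * g * z * g3 x.
Definition Cas1 (x : vec6) : R := g1 x ^ 2 + g2 x ^ 2 + g3 x ^ 2.
Definition Cas2 (x : vec6) : R := M1 x * g1 x + M2 x * g2 x + M3 x * g3 x.
Definition Fm3 (x : vec6) : R := M3 x.

Definition x_eq (Mf3 : R) : vec6 := mk6 0 0 Mf3 0 0 1.

(* Stability with respect to conserved quantities F_i is the same as x_e being
   isolated in its common level set {F_i = F_i(x_e)}: one direction takes
   Phi = sum |y_i - F_i(x_e)|, the other observes that Phi(F) - Phi(F(x_e))
   vanishes on the level set.  For the top, write u = 1 - gamma_3 and
   K = mgz.  On the level set through x_e the planar vectors
   p = (M_1, M_2) and q = (gamma_1, gamma_2) satisfy |p|^2 = 2AKu,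
   |q|^2 = u(2 - u) and p.q = M_3 u, so Cauchy-Schwarz gives
   M_3^2 u^2 <= 2AKu^2(2 - u).  If M_3^2 >= 4AK this forces u = 0 and hence
   x = x_e; if M_3^2 < 4AK these equations have solutions for every small
   u > 0, at distance (2AK + 2)u from x_e. *)
From Stdlib Require Import Reals Lra Psatz.
Open Scope R_scope.

Definition isolated_in_level_set4 (F1 F2 F3 F4 : vec6 -> R) (xe : vec6) : Prop :=
  exists r, 0 < r /\ forall x, x <> xe -> dist6sq x xe < r ^ 2 ->
    ~ (F1 x = F1 xe /\ F2 x = F2 xe /\ F3 x = F3 xe /\ F4 x = F4 xe).

Lemma Rabs_dev_lipschitz (x y c : R) : Rabs (Rabs (x - c) - Rabs (y - c)) <= Rabs (x - y).
Proof.
  replace (x - y) with ((x - c) - (y - c)) by ring.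
  apply Rabs_triang_inv2.
Qed.

Lemma continuous4_sum_Rabs_dev (a0 b0 c0 d0 : R) :
  continuous4 (fun a b c d => Rabs (a - a0) + Rabs (b - b0) + Rabs (c - c0) + Rabs (d - d0)).
Proof.
  intros a b c d eps Heps.
  exists (eps / 4); split; [lra|].
  intros a' b' c' d' Ha Hb Hc Hd.
  destruct (Rabs_def2 _ _ (Rle_lt_trans _ _ _ (Rabs_dev_lipschitz a' a a0) Ha)).
  destruct (Rabs_def2 _ _ (Rle_lt_trans _ _ _ (Rabs_dev_lipschitz b' b b0) Hb)).
  destruct (Rabs_def2 _ _ (Rle_lt_trans _ _ _ (Rabs_dev_lipschitz c' c c0) Hc)).
  destruct (Rabs_def2 _ _ (Rle_lt_trans _ _ _ (Rabs_dev_lipschitz d' d d0) Hd)).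
  apply Rabs_def1; lra.
Qed.

Lemma Rabs_sum4_eq0 (a b c d : R) :
  Rabs a + Rabs b + Rabs c + Rabs d <= 0 -> a = 0 /\ b = 0 /\ c = 0 /\ d = 0.
Proof.
  intros Hle.
  assert (Habs0 : forall t, Rabs t <= 0 -> t = 0).
  { intros t Ht; destruct (Req_dec t 0) as [|Hnz]; [easy|].
    pose proof (Rabs_pos_lt t Hnz); lra. }
  pose proof (Rabs_pos a); pose proof (Rabs_pos b).
  pose proof (Rabs_pos c); pose proof (Rabs_pos d).
  repeat split; apply Habs0; lra.
Qed.

Lemma stable_wrt4_of_isolated (F1 F2 F3 F4 : vec6 -> R) (xe : vec6) :
  isolated_in_level_set4 F1 F2 F3 F4 xe -> stable_wrt4 F1 F2 F3 F4 xe.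
Proof.
  intros [r [Hr Hiso]].
  exists (fun a b c d => Rabs (a - F1 xe) + Rabs (b - F2 xe) + Rabs (c - F3 xe) + Rabs (d - F4 xe)).
  split; [apply continuous4_sum_Rabs_dev|].
  unfold pos_def_at; cbv beta.
  rewrite !Rminus_diag, Rabs_R0.
  split; [ring|].
  exists r; split; [exact Hr|].
  intros x Hne Hd.
  destruct (Rle_or_lt (Rabs (F1 x - F1 xe) + Rabs (F2 x - F2 xe)
                       + Rabs (F3 x - F3 xe) + Rabs (F4 x - F4 xe)) 0) as [Hle|]; [|lra].
  destruct (Rabs_sum4_eq0 _ _ _ _ Hle) as [E1 [E2 [E3 E4]]].
  exfalso; apply (Hiso x Hne Hd); repeat split; lra.
Qed.

Lemma isolated_of_stable_wrt4 (F1 F2 F3 F4 : vec6 -> R) (xe : vec6) :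
  stable_wrt4 F1 F2 F3 F4 xe -> isolated_in_level_set4 F1 F2 F3 F4 xe.
Proof.
  intros [Phi [_ [_ [r [Hr Hpos]]]]].
  exists r; split; [exact Hr|].
  intros x Hne Hd [E1 [E2 [E3 E4]]].
  specialize (Hpos x Hne Hd); cbv beta in Hpos.
  rewrite E1, E2, E3, E4 in Hpos; lra.
Qed.

Lemma stable_wrt4_iff_isolated (F1 F2 F3 F4 : vec6 -> R) (xe : vec6) :
  stable_wrt4 F1 F2 F3 F4 xe <-> isolated_in_level_set4 F1 F2 F3 F4 xe.
Proof.
  split; [apply isolated_of_stable_wrt4 | apply stable_wrt4_of_isolated].
Qed.

Lemma planar_level_set_trivial (a s u p1 p2 q1 q2 : R) :
  0 < a -> 2 * a <= s ^ 2 ->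
  p1 ^ 2 + p2 ^ 2 = a * u -> q1 ^ 2 + q2 ^ 2 = u * (2 - u) -> p1 * q1 + p2 * q2 = s * u ->
  u = 0.
Proof.
  intros Ha Hs Hp Hq Hpq.
  assert (Hu : 0 <= u) by nra.
  assert (Lagrange : (s * u) ^ 2 + (p1 * q2 - p2 * q1) ^ 2 = a * u * (u * (2 - u))).
  { rewrite <- Hpq, <- Hp, <- Hq; ring. }
  assert (Hcube : a * u * (u * u) <= 0).
  { pose proof (pow2_ge_0 (p1 * q2 - p2 * q1)).
    assert (0 <= (s ^ 2 - 2 * a) * (u * u)) by (apply Rmult_le_pos; nra).
    nra. }
  destruct Hu as [Hu|]; [|easy].
  assert (0 < a * u * (u * u)) by (repeat apply Rmult_lt_0_compat; lra).
  lra.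
Qed.

Lemma planar_level_set_solvable (a s u : R) :
  0 < u < 2 -> s ^ 2 <= a * (2 - u) ->
  exists p1 p2 q1, p1 ^ 2 + p2 ^ 2 = a * u /\ q1 ^ 2 = u * (2 - u) /\ p1 * q1 = s * u.
Proof.
  intros Hu Hs.
  assert (Hw : 0 < u * (2 - u)) by nra.
  set (q1 := sqrt (u * (2 - u))).
  assert (Hq1 : 0 < q1) by (apply sqrt_lt_R0; lra).
  assert (Hqq : q1 ^ 2 = u * (2 - u)) by (unfold q1; rewrite pow2_sqrt; lra).
  set (p1 := s * u / q1).
  assert (Hpq : p1 * q1 = s * u) by (unfold p1; field; lra).
  assert (Hrest : 0 <= a * u - p1 ^ 2).
  { assert (E : (a * u - p1 ^ 2) * q1 ^ 2 = u * u * (a * (2 - u) - s ^ 2)).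
    { replace ((a * u - p1 ^ 2) * q1 ^ 2) with (a * u * q1 ^ 2 - (p1 * q1) ^ 2) by ring.
      rewrite Hpq, Hqq; ring. }
    assert (0 <= u * u * (a * (2 - u) - s ^ 2)) by (apply Rmult_le_pos; nra).
    nra. }
  exists p1, (sqrt (a * u - p1 ^ 2)), q1.
  rewrite pow2_sqrt by exact Hrest.
  replace (p1 ^ 2 + (a * u - p1 ^ 2)) with (a * u) by ring.
  repeat split; [exact Hqq | exact Hpq].
Qed.

Section HeavyTop.

Variables A C m g z s : R.
Hypothesis HA : 0 < A.
Hypothesis HK : 0 < m * g * z.

Lemma top_level_set_iff (x : vec6) :
  (Ham A C m g z x = Ham A C m g z (x_eq s) /\ Cas1 x = Cas1 (x_eq s) /\
   Cas2 x = Cas2 (x_eq s) /\ Fm3 x = Fm3 (x_eq s)) <->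
  (M3 x = s /\
   M1 x ^ 2 + M2 x ^ 2 = 2 * A * (m * g * z) * (1 - g3 x) /\
   g1 x ^ 2 + g2 x ^ 2 = (1 - g3 x) * (2 - (1 - g3 x)) /\
   M1 x * g1 x + M2 x * g2 x = s * (1 - g3 x)).
Proof.
  destruct x as [y1 y2 y3 k1 k2 k3].
  unfold Ham, Cas1, Cas2, Fm3, x_eq; cbn [M1 M2 M3 g1 g2 g3].
  split.
  - intros [EH [E1 [E2 ->]]].
    repeat split; [| nra | lra].
    + apply (Rmult_eq_reg_r (/ (2 * A))); [|apply Rinv_neq_0_compat; lra].
      set (c := s ^ 2 / C) in *.
      replace ((y1 ^ 2 + y2 ^ 2) * / (2 * A))
        with (/ 2 * (y1 ^ 2 / A + y2 ^ 2 / A + c) - / 2 * c) by (field; lra).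
      replace (2 * A * (m * g * z) * (1 - k3) * / (2 * A))
        with (m * g * z - m * g * z * k3) by (field; lra).
      replace (0 ^ 2 / A) with 0 in EH by (field; lra).
      lra.
  - intros [-> [EM [Eg Ed]]].
    repeat split; [| nra | lra].
    replace (y1 ^ 2 / A + y2 ^ 2 / A) with ((y1 ^ 2 + y2 ^ 2) / A) by (field; lra).
    rewrite EM.
    set (c := s ^ 2 / C).
    field; lra.
Qed.

Lemma top_level_set_singleton (x : vec6) :
  4 * A * (m * g * z) <= s ^ 2 ->
  Ham A C m g z x = Ham A C m g z (x_eq s) -> Cas1 x = Cas1 (x_eq s) ->
  Cas2 x = Cas2 (x_eq s) -> Fm3 x = Fm3 (x_eq s) ->
  x = x_eq s.
Proof.
  intros Hs EH E1 E2 E3.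
  destruct (proj1 (top_level_set_iff x) (conj EH (conj E1 (conj E2 E3))))
    as [EM3 [EM [Eg Ed]]].
  assert (Hu : 1 - g3 x = 0).
  { apply (planar_level_set_trivial (2 * A * (m * g * z)) s _ _ _ _ _ ltac:(nra) ltac:(lra)
             EM Eg Ed). }
  rewrite Hu in EM, Eg.
  destruct x as [y1 y2 y3 k1 k2 k3]; unfold x_eq; simpl in *.
  f_equal; nra.
Qed.

Lemma top_isolated_of_ge :
  4 * A * (m * g * z) <= s ^ 2 -> isolated_in_level_set4 (Ham A C m g z) Cas1 Cas2 Fm3 (x_eq s).
Proof.
  intros Hs.
  exists 1; split; [lra|].
  intros x Hne _ [EH [E1 [E2 E3]]].
  exact (Hne (top_level_set_singleton x Hs EH E1 E2 E3)).
Qed.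

Lemma top_not_isolated_of_lt :
  s ^ 2 < 4 * A * (m * g * z) -> ~ isolated_in_level_set4 (Ham A C m g z) Cas1 Cas2 Fm3 (x_eq s).
Proof.
  intros Hs [r [Hr Hiso]].
  set (a := 2 * A * (m * g * z)).
  assert (Ha : 0 < a) by (unfold a; nra).
  assert (Hsa : s ^ 2 < 2 * a) by (unfold a; lra).
  assert (Hr2 : 0 < r ^ 2) by (apply pow_lt; lra).
  set (u := Rmin (r ^ 2 / (a + 2) / 2) (Rmin 1 (2 - s ^ 2 / a))).
  assert (Hu_pos : 0 < u).
  { unfold u; repeat apply Rmin_glb_lt; try lra.
    - apply Rdiv_lt_0_compat; [apply Rdiv_lt_0_compat|]; lra.
    - assert (E : s ^ 2 / a * a = s ^ 2) by (field; lra).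
      assert (s ^ 2 / a < 2) by (apply (Rmult_lt_reg_r a); [lra|]; rewrite E; lra).
      lra. }
  assert (Hu_le1 : u <= 1) by (unfold u; eapply Rle_trans; [apply Rmin_r | apply Rmin_l]).
  assert (Hu_s : s ^ 2 <= a * (2 - u)).
  { assert (u <= 2 - s ^ 2 / a) by (unfold u; eapply Rle_trans; [apply Rmin_r | apply Rmin_r]).
    assert (s ^ 2 = a * (s ^ 2 / a)) by (field; lra).
    nra. }
  assert (Hu_r : (a + 2) * u < r ^ 2).
  { assert (u <= r ^ 2 / (a + 2) / 2) by apply Rmin_l.
    assert (r ^ 2 = (a + 2) * (r ^ 2 / (a + 2) / 2) * 2) by (field; lra).
    nra. }
  destruct (planar_level_set_solvable a s u ltac:(lra) Hu_s) as [p1 [p2 [q1 [Hp [Hq Hpq]]]]].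
  set (x := mk6 p1 p2 s q1 0 (1 - u)).
  apply (Hiso x).
  - intros Heq; apply (f_equal g3) in Heq; simpl in Heq; lra.
  - unfold dist6sq, x, x_eq; simpl; nra.
  - apply top_level_set_iff; simpl.
    replace (1 - (1 - u)) with u by ring.
    repeat split; [exact Hp | nra | lra].
Qed.

End HeavyTop.

Theorem mainTheorem2 (A C m g z Mf3 : R) :
  0 < A -> 0 < C -> 0 < m -> 0 < g -> 0 < z ->
  (stable_wrt4 (Ham A C m g z) Cas1 Cas2 Fm3 (x_eq Mf3) <->
   Mf3 ^ 2 >= 4 * A * m * g * z).
Proof.
  intros HA _ Hm Hg Hz.
  assert (HK : 0 < m * g * z) by (repeat apply Rmult_lt_0_compat; lra).
  replace (4 * A * m * g * z) with (4 * A * (m * g * z)) by ring.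
  rewrite stable_wrt4_iff_isolated.
  split.
  - intros Hiso.
    destruct (Rlt_or_le (Mf3 ^ 2) (4 * A * (m * g * z))) as [Hlt|Hge]; [|lra].
    exfalso; exact (top_not_isolated_of_lt A C m g z Mf3 HA Hlt Hiso).
  - intros Hge.
    apply top_isolated_of_ge; [exact HA | exact HK | lra].
Qed.
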